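(* Let $N=2$ with $r_{11}=1$ and let $g\in(-2,2)$, $h=\sqrt{1-g^2/4}$, $G=g/h$. For $\varepsilon\in\{1,-1\}$ and $f\in[0,\pi]$ put $$l_\varepsilon(f)=\Big(\varepsilon\,\tfrac1h\sin f\;e^{\frac G2(f-\frac\pi2)},\;\big(\cos f-\tfrac G2\sin f\big)e^{\frac G2(f-\frac\pi2)}\Big).$$ Then for every $f\in[0,\pi]$ the point $l_\varepsilon(f)$ lies on the Finsleroid Indicatrix, i.e. $K(g;l_\varepsilon(f))=1$, and, writing $l_\varepsilon=(l^1,l^2)$, $$\sqrt{\det\big(g_{pq}(g;l_\varepsilon(f))\big)}\;\Big|\,l^2\frac{dl^1}{df}-l^1\frac{dl^2}{df}\Big|=\frac1h .$$ In other words, along the indicatrix the Landsberg angle $\theta$, defined by $d\theta=\sqrt{\det(g_{pq})}\,|R^2dR^1-R^1dR^2|/K^2$, satisfies $d\theta=\frac1h\,df$, so that $f$ equals $h$ times the Landsberg angle.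
   Context: Here $V_2=\mathbb{R}^2$ with points $R=(R^1,R^2)$, $Z=R^2$, $q(R)=|R^1|$. Define $B(g;R)=Z^2+gqZ+q^2$, $A(g;R)=Z+\frac12 gq$, $\Phi(g;R)=\arctan\big(A/(hq)\big)$ if $q>0$, $\Phi=\pi/2$ if $q=0,Z>0$, $\Phi=-\pi/2$ if $q=0,Z<0$; $J(g;R)=e^{\frac12 G\Phi}$ and the Finsleroid metric function $K(g;R)=\sqrt{B(g;R)}\,J(g;R)$ ($K(g;0)=0$). The Finsler metric tensor is $g_{pq}(g;R)=\frac12\,\partial^2K^2(g;R)/\partial R^p\partial R^q$. The Finsleroid Indicatrix is $\{R:K(g;R)=1\}$. *)

From Stdlib Require Import Reals Lra.
From Coquelicot Require Import Coquelicot.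
Open Scope R_scope.

Definition pt := (R * R)%type.

Definition hh (g : R) : R := sqrt (1 - g ^ 2 / 4).
Definition GG (g : R) : R := g / hh g.

Definition Zc (X : pt) : R := snd X.
Definition qf (X : pt) : R := Rabs (fst X).

Definition Bf (g : R) (X : pt) : R := Zc X ^ 2 + g * qf X * Zc X + qf X ^ 2.
Definition Af (g : R) (X : pt) : R := Zc X + / 2 * g * qf X.

(* Phi; on the remaining point q = 0, Z = 0 (the origin) the value is irrelevant
   since K(g;0) = 0 is set separately. *)
Definition Phi (g : R) (X : pt) : R :=
  if Rlt_dec 0 (qf X) then atan (Af g X / (hh g * qf X))
  else if Rlt_dec 0 (Zc X) then PI / 2
  else - (PI / 2).

Definition Jf (g : R) (X : pt) : R := exp (/ 2 * GG g * Phi g X).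

Definition Kf (g : R) (X : pt) : R :=
  match Req_EM_T (fst X) 0, Req_EM_T (snd X) 0 with
  | left _, left _ => 0
  | _, _ => sqrt (Bf g X) * Jf g X
  end.

Definition partial (p : nat) (F : pt -> R) (X : pt) : R :=
  match p with
  | 1%nat => Derive (fun a => F (a, snd X)) (fst X)
  | _ => Derive (fun b => F (fst X, b)) (snd X)
  end.

Definition gmet (g : R) (p q : nat) (X : pt) : R :=
  / 2 * partial p (partial q (fun Y => Kf g Y ^ 2)) X.

Definition det_gmet (g : R) (X : pt) : R :=
  gmet g 1 1 X * gmet g 2 2 X - gmet g 1 2 X * gmet g 2 1 X.

Definition l1 (g eps f : R) : R :=
  eps * / hh g * sin f * exp (GG g / 2 * (f - PI / 2)).
Definition l2 (g f : R) : R :=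
  (cos f - GG g / 2 * sin f) * exp (GG g / 2 * (f - PI / 2)).
Definition lcurve (g eps f : R) : pt := (l1 g eps f, l2 g f).

From Stdlib Require Import Reals Lra Nsatz.
From Coquelicot Require Import Coquelicot.
Open Scope R_scope.

(* Off the axis R^1 = 0 the function K^2 = B e^(G Phi) is smooth, with
   dPhi/dR^1 = - sgn(R^1) h Z / B and dPhi/dR^2 = h q / B; hence the first partials of K^2
   are 2 R^1 e^(G Phi) and 2 (Z + g q) e^(G Phi), and det g_pq = e^(2 G Phi).  On the axis
   q and Phi have kinks in R^1, but there Phi = ± PI/2 - atan (h q / A) is smooth in q and
   the kinks cancel in every entry, so the same formulas hold.  Along l_eps one finds
   B = e^(G (f - PI/2)) and Phi = PI/2 - f, so K = 1 and sqrt (det g_pq) = e^(G (PI/2 - f)),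
   while the Wronskian l^2 dl^1/df - l^1 dl^2/df equals eps e^(G (f - PI/2)) / h. *)

Lemma sign_mul_self x : sign x * x = Rabs x.
Proof.
  destruct (Rtotal_order x 0) as [Hx | [-> | Hx]].
  - rewrite sign_eq_m1, Rabs_left by exact Hx. ring.
  - rewrite sign_0, Rabs_R0. ring.
  - rewrite sign_eq_1, Rabs_right by lra. ring.
Qed.

Lemma sign_sqr x : x <> 0 -> sign x * sign x = 1.
Proof.
  intros Hx. destruct (Rdichotomy _ _ Hx) as [Hn | Hp].
  - rewrite sign_eq_m1 by exact Hn. ring.
  - rewrite sign_eq_1 by exact Hp. ring.
Qed.

Lemma locally_sign x : x <> 0 -> locally x (fun y => sign y = sign x).
Proof.
  intros Hx. destruct (Rdichotomy _ _ Hx) as [Hn | Hp].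
  - apply (filter_imp (fun y => y < 0)); [| exact (open_lt 0 x Hn)].
    intros y Hy. now rewrite !sign_eq_m1.
  - apply (filter_imp (fun y => 0 < y)); [| exact (open_gt 0 x Hp)].
    intros y Hy. now rewrite !sign_eq_1.
Qed.

Lemma locally_Rabs_lt r : 0 < r -> locally 0 (fun t => Rabs t < r).
Proof.
  intros Hr. apply (filter_imp (ball 0 (mkposreal r Hr))); [| apply locally_ball].
  intros t Ht. change (Rabs (t - 0) < r) in Ht. now rewrite Rminus_0_r in Ht.
Qed.

Lemma is_derive_exp_scal (phi : R -> R) c x d :
  is_derive phi x d ->
  is_derive (fun t => exp (c * phi t)) x (c * d * exp (c * phi x)).
Proof.
  intros Hd. apply (is_derive_comp exp (fun t => c * phi t)).
  - apply is_derive_exp.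
  - now apply is_derive_scal.
Qed.

Lemma is_derive_comp_Rabs_0 (psi : R -> R) :
  is_derive psi 0 0 -> is_derive (fun t => psi (Rabs t)) 0 0.
Proof.
  rewrite !is_derive_Reals. intros Hd eps Heps.
  destruct (Hd eps Heps) as [del Hdel]. exists del. intros t Ht Hlt.
  specialize (Hdel (Rabs t) (Rabs_no_R0 t Ht)). rewrite Rabs_Rabsolu in Hdel.
  specialize (Hdel Hlt). rewrite Rplus_0_l, Rabs_R0 in *. rewrite Rminus_0_r in *.
  unfold Rdiv in *. rewrite Rabs_mult, Rabs_inv in *. rewrite Rabs_Rabsolu in Hdel. exact Hdel.
Qed.

Lemma is_derive_id_mult_0 (k : R -> R) :
  continuous k 0 -> is_derive (fun t => t * k t) 0 (k 0).
Proof.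
  rewrite is_derive_Reals. intros Hc%continuity_pt_filterlim eps Heps.
  destruct (Hc eps Heps) as [al [Hal H]]. exists (mkposreal al Hal).
  intros t Ht Hlt. rewrite Rplus_0_l, Rmult_0_l, Rminus_0_r.
  replace (t * k t / t - k 0) with (k t - k 0) by (field; exact Ht).
  apply (H t). split; [easy |]. simpl. unfold R_dist. now rewrite Rminus_0_r.
Qed.

Lemma is_derive_mult_eq (f k : R -> R) x df dk d :
  is_derive f x df -> is_derive k x dk -> df * k x + f x * dk = d ->
  is_derive (fun t => f t * k t) x d.
Proof. intros Hf Hk <-. now apply Derive.is_derive_mult. Qed.

Lemma locally_nonzero_fst a b : a <> 0 \/ b <> 0 -> locally a (fun u => u <> 0 \/ b <> 0).
Proof.
  intros [Ha | Hb].
  - apply (filter_imp (fun u => u <> 0)); [now left | exact (open_neq 0 a Ha)].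
  - apply filter_forall. now right.
Qed.

Lemma locally_nonzero_snd a b : a <> 0 \/ b <> 0 -> locally b (fun v => a <> 0 \/ v <> 0).
Proof.
  intros [Ha | Hb].
  - apply filter_forall. now left.
  - apply (filter_imp (fun v => v <> 0)); [now right | exact (open_neq 0 b Hb)].
Qed.

Section Finsleroid.

Variable g : R.
Hypothesis Hg : -2 < g < 2.

Lemma hh_pos : 0 < hh g.
Proof. unfold hh. apply sqrt_lt_R0. nra. Qed.

Lemma hh_sqr : 4 * hh g ^ 2 = 4 - g ^ 2.
Proof. unfold hh. rewrite pow2_sqrt by nra. field. Qed.

Lemma Bf_pair a b : Bf g (a, b) = b ^ 2 + g * Rabs a * b + a ^ 2.
Proof. unfold Bf, Zc, qf; cbn [fst snd]. rewrite pow2_abs. ring. Qed.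

Lemma Bf_pos a b : a <> 0 \/ b <> 0 -> 0 < Bf g (a, b).
Proof.
  intros Hab. rewrite Bf_pair, <- (pow2_abs a).
  assert (Hsq : b ^ 2 + g * Rabs a * b + Rabs a ^ 2
                = (b + g * Rabs a / 2) ^ 2 + (1 - g ^ 2 / 4) * Rabs a ^ 2) by field.
  rewrite Hsq. destruct (Req_dec a 0) as [-> | Ha].
  - rewrite Rabs_R0. destruct Hab as [Ha | Hb]; [easy |].
    pose proof (pow2_gt_0 b Hb). nra.
  - assert (0 < 1 - g ^ 2 / 4) by nra.
    assert (0 < Rabs a ^ 2) by (apply pow_lt, Rabs_pos_lt, Ha).
    pose proof (pow2_ge_0 (b + g * Rabs a / 2)). nra.
Qed.

Lemma Phi_off_axis a b :
  a <> 0 -> Phi g (a, b) = atan ((b + / 2 * g * Rabs a) / (hh g * Rabs a)).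
Proof.
  intros Ha. unfold Phi, Af, qf, Zc; cbn [fst snd].
  destruct (Rlt_dec 0 (Rabs a)) as [_ | Hn]; [easy |].
  exfalso. apply Hn, Rabs_pos_lt, Ha.
Qed.

Definition Phi_axis_chart (b q : R) : R :=
  sign b * (PI / 2) - atan (hh g * q / (b + / 2 * g * q)).

(* Near the axis q = 0, atan (A / (h q)) = ± PI/2 - atan (h q / A) extends smoothly to q = 0. *)
Lemma Phi_near_axis a b :
  b <> 0 -> Rabs a < Rabs b / 2 -> Phi g (a, b) = Phi_axis_chart b (Rabs a).
Proof.
  intros Hb Ha. unfold Phi, Phi_axis_chart, Af, qf, Zc; cbn [fst snd].
  pose proof hh_pos. pose proof (Rabs_pos a).
  assert (HA : sign b * (b + / 2 * g * Rabs a) > 0).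
  { destruct (Rdichotomy _ _ Hb) as [Hn | Hp].
    - rewrite sign_eq_m1 by exact Hn. rewrite (Rabs_left b) in Ha by exact Hn. nra.
    - rewrite sign_eq_1 by exact Hp. rewrite (Rabs_right b) in Ha by lra. nra. }
  destruct (Rlt_dec 0 (Rabs a)) as [Hq | Hq].
  - destruct (Rdichotomy _ _ Hb) as [Hn | Hp].
    + rewrite sign_eq_m1 in * by exact Hn.
      replace ((b + / 2 * g * Rabs a) / (hh g * Rabs a))
        with (- / (hh g * Rabs a / - (b + / 2 * g * Rabs a))) by (field; lra).
      rewrite atan_opp, atan_inv by (apply Rdiv_lt_0_compat; nra).
      replace (hh g * Rabs a / - (b + / 2 * g * Rabs a))
        with (- (hh g * Rabs a / (b + / 2 * g * Rabs a))) by (field; lra).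
      rewrite atan_opp. ring.
    + rewrite sign_eq_1 in * by exact Hp.
      replace ((b + / 2 * g * Rabs a) / (hh g * Rabs a))
        with (/ (hh g * Rabs a / (b + / 2 * g * Rabs a))) by (field; lra).
      rewrite atan_inv by (apply Rdiv_lt_0_compat; nra). ring.
  - assert (Rabs a = 0) as -> by lra.
    rewrite Rmult_0_r, Rdiv_0_l, atan_0, Rminus_0_r.
    destruct (Rdichotomy _ _ Hb) as [Hn | Hp].
    + rewrite sign_eq_m1 by exact Hn. destruct (Rlt_dec 0 b); [lra | ring].
    + rewrite sign_eq_1 by exact Hp. destruct (Rlt_dec 0 b); [ring | lra].
Qed.

Lemma Phi_on_axis b : b <> 0 -> Phi g (0, b) = sign b * (PI / 2).
Proof.
  intros Hb. rewrite Phi_near_axis by (rewrite ?Rabs_R0; auto; pose proof (Rabs_pos_lt b Hb); lra).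
  unfold Phi_axis_chart. rewrite Rabs_R0, Rmult_0_r, Rdiv_0_l, atan_0. ring.
Qed.

Lemma Phi_derive_snd a b : a <> 0 \/ b <> 0 ->
  is_derive (fun v => Phi g (a, v)) b (hh g * Rabs a / Bf g (a, b)).
Proof.
  intros Hab. pose proof (Bf_pos a b Hab) as HB. rewrite Bf_pair in *.
  destruct (Req_dec a 0) as [-> | Ha].
  - assert (Hb : b <> 0) by tauto.
    apply (is_derive_ext_loc (fun _ => sign b * (PI / 2))).
    + apply (filter_imp (fun v => sign v = sign b)); [| exact (locally_sign b Hb)].
      intros v Hv. rewrite Phi_on_axis, Hv; [easy |].
      intros ->. rewrite sign_0 in Hv. now apply (sign_neq_0 b Hb).
    + rewrite Rabs_R0, Rmult_0_r, Rdiv_0_l. auto_derive; [easy | ring].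
  - apply (is_derive_ext (fun v => atan ((v + / 2 * g * Rabs a) / (hh g * Rabs a)))).
    { intros v. now rewrite Phi_off_axis. }
    pose proof hh_pos as Hh0. pose proof hh_sqr as Hh. pose proof (Rabs_pos_lt a Ha) as Hq.
    assert (Hqq : Rabs a * Rabs a = a * a) by (rewrite <- Rabs_mult; apply Rabs_right; nra).
    auto_derive; [nra |].
    set (q := Rabs a) in *. set (h := hh g) in *. clearbody q h.
    field_simplify_eq; [| nra].
    clear -Hh Hqq. cbn [pow] in *. nsatz.
Qed.

Lemma Phi_derive_fst a b : a <> 0 ->
  is_derive (fun u => Phi g (u, b)) a (- sign a * hh g * b / Bf g (a, b)).
Proof.
  intros Ha. pose proof (Bf_pos a b (or_introl Ha)) as HB. rewrite Bf_pair in *.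
  apply (is_derive_ext_loc (fun u => atan ((b + / 2 * g * Rabs u) / (hh g * Rabs u)))).
  { apply (filter_imp (fun u => u <> 0)); [| exact (open_neq 0 a Ha)].
    intros u Hu. now rewrite Phi_off_axis. }
  pose proof hh_pos as Hh0. pose proof hh_sqr as Hh. pose proof (Rabs_pos_lt a Ha) as Hq.
  pose proof (sign_mul_self a) as Hsa. pose proof (sign_sqr a Ha) as Hss.
  auto_derive; [repeat split; nra |].
  set (q := Rabs a) in *. set (s := sign a) in *. set (h := hh g) in *. clearbody q s h.
  field_simplify_eq; [| nra].
  clear -Hh Hsa Hss. cbn [pow] in *. nsatz.
Qed.

Lemma Phi_axis_chart_derive b : b <> 0 ->
  is_derive (Phi_axis_chart b) 0 (- hh g / b).
Proof.
  intros Hb. unfold Phi_axis_chart. auto_derive.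
  - rewrite Rmult_0_r, Rplus_0_r. easy.
  - rewrite !Rmult_0_r, Rplus_0_r. field. exact Hb.
Qed.

Definition expGPhi (X : pt) : R := exp (GG g * Phi g X).

Lemma Kf_sqr a b : a <> 0 \/ b <> 0 ->
  Kf g (a, b) ^ 2 = (b ^ 2 + g * Rabs a * b + a ^ 2) * expGPhi (a, b).
Proof.
  intros Hab. rewrite <- Bf_pair.
  assert (Hroot : (sqrt (Bf g (a, b)) * Jf g (a, b)) ^ 2 = Bf g (a, b) * expGPhi (a, b)).
  { unfold Jf, expGPhi. rewrite Rpow_mult_distr, pow2_sqrt by (left; apply Bf_pos, Hab).
    f_equal. cbn [pow]. rewrite Rmult_1_r, <- exp_plus. f_equal. field. }
  unfold Kf; cbn [fst snd].
  destruct (Req_EM_T a 0), (Req_EM_T b 0); tauto.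
Qed.

Lemma expGPhi_derive_snd a b : a <> 0 \/ b <> 0 ->
  is_derive (fun v => expGPhi (a, v)) b (g * Rabs a / Bf g (a, b) * expGPhi (a, b)).
Proof.
  intros Hab. unfold expGPhi.
  replace (g * Rabs a / Bf g (a, b)) with (GG g * (hh g * Rabs a / Bf g (a, b)))
    by (unfold GG; field; split; [apply Rgt_not_eq, Bf_pos, Hab | apply Rgt_not_eq, hh_pos]).
  apply is_derive_exp_scal, Phi_derive_snd, Hab.
Qed.

Lemma expGPhi_derive_fst a b : a <> 0 ->
  is_derive (fun u => expGPhi (u, b)) a (- g * sign a * b / Bf g (a, b) * expGPhi (a, b)).
Proof.
  intros Ha. unfold expGPhi.
  replace (- g * sign a * b / Bf g (a, b)) with (GG g * (- sign a * hh g * b / Bf g (a, b)))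
    by (unfold GG; field; split; [apply Rgt_not_eq, Bf_pos; now left | apply Rgt_not_eq, hh_pos]).
  apply is_derive_exp_scal, Phi_derive_fst, Ha.
Qed.

Lemma expGPhi_near_axis b : b <> 0 ->
  locally 0 (fun t => expGPhi (t, b) = exp (GG g * Phi_axis_chart b (Rabs t))).
Proof.
  intros Hb. apply (filter_imp (fun t => Rabs t < Rabs b / 2)).
  - intros t Ht. unfold expGPhi. now rewrite Phi_near_axis.
  - apply locally_Rabs_lt. pose proof (Rabs_pos_lt b Hb). lra.
Qed.

Lemma expGPhi_continuous_axis b : b <> 0 -> continuous (fun u => expGPhi (u, b)) 0.
Proof.
  intros Hb.
  assert (Hc : continuous (fun q => exp (GG g * Phi_axis_chart b q)) (Rabs 0)).
  { rewrite Rabs_R0. apply (ex_derive_continuous (K := R_AbsRing) (V := R_NormedModule)).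
    eexists. apply is_derive_exp_scal, Phi_axis_chart_derive, Hb. }
  apply (continuous_ext_loc _ (fun t => exp (GG g * Phi_axis_chart b (Rabs t)))).
  - apply (filter_imp _ _ (fun t Ht => eq_sym Ht)), expGPhi_near_axis, Hb.
  - exact (continuous_comp Rabs _ 0 (continuous_Rabs 0) Hc).
Qed.

(* The kinks of P (|u|) and of expGPhi (u, b) at u = 0 cancel. *)
Lemma expGPhi_balanced_derive_axis (P : R -> R) b : b <> 0 ->
  is_derive P 0 (g * P 0 / b) ->
  is_derive (fun u => P (Rabs u) * expGPhi (u, b)) 0 0.
Proof.
  intros Hb HP.
  apply (is_derive_ext_loc (fun t => P (Rabs t) * exp (GG g * Phi_axis_chart b (Rabs t)))).
  { apply (filter_imp _ _ (fun t Ht => f_equal (Rmult (P (Rabs t))) (eq_sym Ht))).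
    exact (expGPhi_near_axis b Hb). }
  apply (is_derive_comp_Rabs_0 (fun q => P q * exp (GG g * Phi_axis_chart b q))).
  pose proof (Derive.is_derive_mult _ _ 0 _ _ HP
                (is_derive_exp_scal _ (GG g) 0 _ (Phi_axis_chart_derive b Hb))) as Hd.
  cbv beta in Hd.
  match type of Hd with is_derive _ _ ?d => replace d with 0 in Hd; [exact Hd |] end.
  unfold GG. field. split; [exact Hb | apply Rgt_not_eq, hh_pos].
Qed.

Lemma Kf_sqr_derive_snd a b : a <> 0 \/ b <> 0 ->
  is_derive (fun v => Kf g (a, v) ^ 2) b (2 * (b + g * Rabs a) * expGPhi (a, b)).
Proof.
  intros Hab.
  apply (is_derive_ext_loc (fun v : R => (v ^ 2 + g * Rabs a * v + a ^ 2) * expGPhi (a, v))).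
  { apply (filter_imp _ _ (fun v Hv => eq_sym (Kf_sqr a v Hv))).
    exact (locally_nonzero_snd a b Hab). }
  eapply (is_derive_mult_eq _ _ _ (2 * b + g * Rabs a)).
  - auto_derive; [easy | ring].
  - apply expGPhi_derive_snd, Hab.
  - pose proof (Bf_pos a b Hab) as HB. rewrite Bf_pair in *. field. lra.
Qed.

Lemma Kf_sqr_derive_fst a b : a <> 0 \/ b <> 0 ->
  is_derive (fun u => Kf g (u, b) ^ 2) a (2 * a * expGPhi (a, b)).
Proof.
  intros Hab.
  apply (is_derive_ext_loc (fun u : R => (b ^ 2 + g * Rabs u * b + u ^ 2) * expGPhi (u, b))).
  { apply (filter_imp _ _ (fun u Hu => eq_sym (Kf_sqr u b Hu))).
    exact (locally_nonzero_fst a b Hab). }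
  destruct (Req_dec a 0) as [-> | Ha].
  - assert (Hb : b <> 0) by tauto.
    rewrite Rmult_0_r, Rmult_0_l.
    apply (is_derive_ext (fun u => (b ^ 2 + g * Rabs u * b + Rabs u ^ 2) * expGPhi (u, b))).
    { intros u. now rewrite pow2_abs. }
    apply (expGPhi_balanced_derive_axis (fun q => b ^ 2 + g * q * b + q ^ 2) b Hb).
    auto_derive; [easy | field; exact Hb].
  - eapply (is_derive_mult_eq _ _ _ (g * sign a * b + 2 * a)).
    + auto_derive; [easy | ring].
    + apply expGPhi_derive_fst, Ha.
    + pose proof (Bf_pos a b Hab) as HB. rewrite Bf_pair in *.
      field. lra.
Qed.

Lemma partial1_Kf_sqr a b : a <> 0 \/ b <> 0 ->
  partial 1 (fun Y => Kf g Y ^ 2) (a, b) = 2 * a * expGPhi (a, b).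
Proof. intros Hab. apply is_derive_unique, Kf_sqr_derive_fst, Hab. Qed.

Lemma partial2_Kf_sqr a b : a <> 0 \/ b <> 0 ->
  partial 2 (fun Y => Kf g Y ^ 2) (a, b) = 2 * (b + g * Rabs a) * expGPhi (a, b).
Proof. intros Hab. apply is_derive_unique, Kf_sqr_derive_snd, Hab. Qed.

Lemma gmet11 a b : a <> 0 \/ b <> 0 ->
  gmet g 1 1 (a, b) = expGPhi (a, b) * (1 - g * Rabs a * b / Bf g (a, b)).
Proof.
  intros Hab. unfold gmet, partial at 1; cbn [fst snd].
  pose proof (Bf_pos a b Hab) as HB.
  replace (expGPhi (a, b) * (1 - g * Rabs a * b / Bf g (a, b)))
    with (/ 2 * (2 * expGPhi (a, b) * (1 - g * Rabs a * b / Bf g (a, b)))) by (field; lra).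
  f_equal. apply is_derive_unique, (is_derive_ext_loc (fun u : R => 2 * u * expGPhi (u, b))).
  { apply (filter_imp _ _ (fun u Hu => eq_sym (partial1_Kf_sqr u b Hu))).
    exact (locally_nonzero_fst a b Hab). }
  destruct (Req_dec a 0) as [-> | Ha].
  - apply (is_derive_ext (fun u : R => u * (2 * expGPhi (u, b)))); [intros u; simpl; ring |].
    replace (2 * expGPhi (0, b) * (1 - g * Rabs 0 * b / Bf g (0, b))) with (2 * expGPhi (0, b))
      by (rewrite Rabs_R0; field; lra).
    apply is_derive_id_mult_0, (continuous_scal_r 2 (fun u => expGPhi (u, b))).
    apply expGPhi_continuous_axis. tauto.
  - eapply (is_derive_mult_eq _ _ _ 2).
    + auto_derive; [easy | ring].
    + apply expGPhi_derive_fst, Ha.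
    + rewrite <- (sign_mul_self a). field. lra.
Qed.

Lemma gmet12 a b : a <> 0 \/ b <> 0 ->
  gmet g 1 2 (a, b) = expGPhi (a, b) * (g * a * Rabs a / Bf g (a, b)).
Proof.
  intros Hab. unfold gmet, partial at 1; cbn [fst snd].
  pose proof (Bf_pos a b Hab) as HB.
  replace (expGPhi (a, b) * (g * a * Rabs a / Bf g (a, b)))
    with (/ 2 * (2 * expGPhi (a, b) * (g * a * Rabs a / Bf g (a, b)))) by (field; lra).
  f_equal. apply is_derive_unique.
  apply (is_derive_ext_loc (fun u : R => 2 * (b + g * Rabs u) * expGPhi (u, b))).
  { apply (filter_imp _ _ (fun u Hu => eq_sym (partial2_Kf_sqr u b Hu))).
    exact (locally_nonzero_fst a b Hab). }
  destruct (Req_dec a 0) as [-> | Ha].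
  - rewrite Rmult_0_r, Rmult_0_l, Rdiv_0_l, Rmult_0_r.
    apply (expGPhi_balanced_derive_axis (fun q => 2 * (b + g * q))); [tauto |].
    auto_derive; [easy | field; tauto].
  - eapply (is_derive_mult_eq _ _ _ (2 * (g * sign a))).
    + auto_derive; [easy | ring].
    + apply expGPhi_derive_fst, Ha.
    + rewrite Bf_pair in *. pose proof (sign_mul_self a) as Hsa. pose proof (sign_sqr a Ha) as Hss.
      set (q := Rabs a) in *. set (s := sign a) in *. set (E := expGPhi (a, b)). clearbody q s E.
      field_simplify_eq; [| lra]. clear -Hsa Hss. cbn [pow] in *. nsatz.
Qed.

Lemma gmet21 a b : a <> 0 \/ b <> 0 ->
  gmet g 2 1 (a, b) = expGPhi (a, b) * (g * a * Rabs a / Bf g (a, b)).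
Proof.
  intros Hab. unfold gmet, partial at 1; cbn [fst snd].
  pose proof (Bf_pos a b Hab) as HB.
  replace (expGPhi (a, b) * (g * a * Rabs a / Bf g (a, b)))
    with (/ 2 * (2 * a * (g * Rabs a / Bf g (a, b) * expGPhi (a, b)))) by (field; lra).
  f_equal. apply is_derive_unique.
  apply (is_derive_ext_loc (fun v => 2 * a * expGPhi (a, v))).
  { apply (filter_imp _ _ (fun v Hv => eq_sym (partial1_Kf_sqr a v Hv))).
    exact (locally_nonzero_snd a b Hab). }
  apply is_derive_scal, expGPhi_derive_snd, Hab.
Qed.

Lemma gmet22 a b : a <> 0 \/ b <> 0 ->
  gmet g 2 2 (a, b) = expGPhi (a, b) * (1 + g * Rabs a * (b + g * Rabs a) / Bf g (a, b)).
Proof.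
  intros Hab. unfold gmet, partial at 1; cbn [fst snd].
  pose proof (Bf_pos a b Hab) as HB.
  replace (expGPhi (a, b) * (1 + g * Rabs a * (b + g * Rabs a) / Bf g (a, b)))
    with (/ 2 * (2 * expGPhi (a, b) * (1 + g * Rabs a * (b + g * Rabs a) / Bf g (a, b))))
    by (field; lra).
  f_equal. apply is_derive_unique.
  apply (is_derive_ext_loc (fun v : R => 2 * (v + g * Rabs a) * expGPhi (a, v))).
  { apply (filter_imp _ _ (fun v Hv => eq_sym (partial2_Kf_sqr a v Hv))).
    exact (locally_nonzero_snd a b Hab). }
  eapply (is_derive_mult_eq _ _ _ 2).
  - auto_derive; [easy | ring].
  - apply expGPhi_derive_snd, Hab.
  - field. lra.
Qed.

Lemma det_gmet_eq_sqr_expGPhi a b : a <> 0 \/ b <> 0 -> det_gmet g (a, b) = expGPhi (a, b) ^ 2.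
Proof.
  intros Hab. unfold det_gmet. rewrite gmet11, gmet12, gmet21, gmet22 by exact Hab.
  pose proof (Bf_pos a b Hab) as HB. rewrite Bf_pair in *.
  assert (Hqq : Rabs a * Rabs a = a * a) by (rewrite <- Rabs_mult; apply Rabs_right; nra).
  set (q := Rabs a) in *. set (E := expGPhi (a, b)). clearbody q E.
  field_simplify_eq; [| lra]. clear -Hqq. cbn [pow] in *. nsatz.
Qed.

Lemma Rabs_l1 eps f : eps = 1 \/ eps = -1 -> 0 <= f <= PI ->
  Rabs (l1 g eps f) = / hh g * sin f * exp (GG g / 2 * (f - PI / 2)).
Proof.
  intros He Hf. unfold l1.
  assert (Hnn : 0 <= / hh g * sin f * exp (GG g / 2 * (f - PI / 2))).
  { apply Rmult_le_pos; [apply Rmult_le_pos |].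
    - left. apply Rinv_0_lt_compat, hh_pos.
    - apply sin_ge_0; lra.
    - left. apply exp_pos. }
  destruct He as [-> | ->].
  - rewrite Rabs_right; lra.
  - rewrite <- Rabs_Ropp, Rabs_right; lra.
Qed.

Lemma Bf_lcurve eps f : eps = 1 \/ eps = -1 -> 0 <= f <= PI ->
  Bf g (lcurve g eps f) = exp (GG g / 2 * (f - PI / 2)) ^ 2.
Proof.
  intros He Hf. unfold lcurve. rewrite Bf_pair, Rabs_l1 by assumption.
  pose proof hh_pos as Hh0. pose proof hh_sqr as Hh.
  assert (Hee : eps * eps = 1) by (destruct He as [-> | ->]; ring).
  pose proof (sin2_cos2 f) as Hsc. unfold Rsqr in Hsc.
  unfold l1, l2, GG. set (E := exp _). set (s := sin f) in *. set (c := cos f) in *.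
  set (h := hh g) in *. clearbody E s c h.
  field_simplify_eq; [| lra]. clear -Hh Hee Hsc. cbn [pow] in *. nsatz.
Qed.

Lemma lcurve_nonzero eps f : eps = 1 \/ eps = -1 -> 0 <= f <= PI ->
  l1 g eps f <> 0 \/ l2 g f <> 0.
Proof.
  intros He Hf. pose proof (Bf_lcurve eps f He Hf) as HB. unfold lcurve in HB.
  pose proof (pow_lt _ 2 (exp_pos (GG g / 2 * (f - PI / 2)))) as He2.
  destruct (Req_dec (l1 g eps f) 0) as [H1 | H1]; [| now left].
  destruct (Req_dec (l2 g f) 0) as [H2 | H2]; [| now right].
  rewrite Bf_pair, H1, H2, Rabs_R0 in HB. lra.
Qed.

Lemma Phi_lcurve eps f : eps = 1 \/ eps = -1 -> 0 <= f <= PI ->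
  Phi g (lcurve g eps f) = PI / 2 - f.
Proof.
  intros He Hf. unfold lcurve.
  pose proof hh_pos as Hh0. pose proof (exp_pos (GG g / 2 * (f - PI / 2))) as HE.
  destruct (Req_dec f 0) as [-> | Hf0]; [| destruct (Req_dec f PI) as [-> | HfP]].
  - unfold l1, l2. rewrite sin_0, cos_0, !Rmult_0_r, Rmult_0_l, Rminus_0_r, Rmult_1_l.
    rewrite Phi_on_axis, sign_eq_1 by lra. ring.
  - unfold l1, l2. rewrite sin_PI, cos_PI, !Rmult_0_r, Rmult_0_l, Rminus_0_r.
    rewrite Phi_on_axis, sign_eq_m1 by nra. field.
  - assert (Hs : 0 < sin f) by (apply sin_gt_0; lra).
    assert (Hl1 : l1 g eps f <> 0).
    { intros H0. pose proof (Rabs_l1 eps f He Hf) as Ha. rewrite H0, Rabs_R0 in Ha.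
      assert (0 < / hh g * sin f * exp (GG g / 2 * (f - PI / 2))); [| lra].
      apply Rmult_lt_0_compat; [apply Rmult_lt_0_compat |]; auto. now apply Rinv_0_lt_compat. }
    rewrite Phi_off_axis, Rabs_l1 by assumption.
    rewrite <- (atan_tan (PI / 2 - f)) by lra. f_equal.
    unfold tan. rewrite sin_shift, cos_shift. unfold l2, GG in *. field. repeat split; lra.
Qed.

Lemma Kf_lcurve eps f : eps = 1 \/ eps = -1 -> 0 <= f <= PI -> Kf g (lcurve g eps f) = 1.
Proof.
  intros He Hf.
  pose proof (lcurve_nonzero eps f He Hf) as Hnz.
  pose proof (exp_pos (GG g / 2 * (f - PI / 2))) as HE.
  unfold Kf, lcurve; cbn [fst snd].
  assert (Hval : sqrt (Bf g (l1 g eps f, l2 g f)) * Jf g (l1 g eps f, l2 g f) = 1).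
  { unfold Jf. fold (lcurve g eps f). rewrite Bf_lcurve, Phi_lcurve, sqrt_pow2 by (auto; lra).
    rewrite <- exp_plus, <- exp_0. f_equal. field. }
  destruct (Req_EM_T (l1 g eps f) 0), (Req_EM_T (l2 g f) 0); tauto.
Qed.

Lemma lcurve_wronskian eps f : eps = 1 \/ eps = -1 ->
  l2 g f * Derive (fun t => l1 g eps t) f - l1 g eps f * Derive (fun t => l2 g t) f
  = eps / hh g * exp (GG g / 2 * (f - PI / 2)) ^ 2.
Proof.
  intros He. pose proof hh_pos as Hh0.
  assert (D1 : Derive (fun t => l1 g eps t) f
               = eps / hh g * (cos f + GG g / 2 * sin f) * exp (GG g / 2 * (f - PI / 2))).
  { apply is_derive_unique. unfold l1. auto_derive; [easy |]. unfold Rminus. field. lra. }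
  assert (D2 : Derive (fun t => l2 g t) f
               = - sin f * (1 + GG g ^ 2 / 4) * exp (GG g / 2 * (f - PI / 2))).
  { apply is_derive_unique. unfold l2. auto_derive; [easy |]. unfold Rminus. field. }
  rewrite D1, D2. pose proof (sin2_cos2 f) as Hsc. unfold Rsqr in Hsc. unfold l1, l2.
  set (E := exp _). set (s := sin f) in *. set (c := cos f) in *. set (G := GG g).
  set (h := hh g) in *. clearbody E s c G h.
  field_simplify_eq; [| lra]. clear -Hsc. cbn [pow] in *. nsatz.
Qed.

Lemma Rabs_lcurve_wronskian eps f : eps = 1 \/ eps = -1 ->
  Rabs (l2 g f * Derive (fun t => l1 g eps t) f - l1 g eps f * Derive (fun t => l2 g t) f)
  = / hh g * exp (GG g / 2 * (f - PI / 2)) ^ 2.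
Proof.
  intros He. rewrite lcurve_wronskian by exact He.
  assert (Hnn : 0 <= / hh g * exp (GG g / 2 * (f - PI / 2)) ^ 2).
  { apply Rmult_le_pos; [left; apply Rinv_0_lt_compat, hh_pos | apply pow2_ge_0]. }
  unfold Rdiv. rewrite Rmult_assoc, Rabs_mult, (Rabs_right (/ hh g * _)) by lra.
  destruct He as [-> | ->]; [rewrite Rabs_R1 | rewrite Rabs_left by lra]; ring.
Qed.

Lemma expGPhi_lcurve eps f : eps = 1 \/ eps = -1 -> 0 <= f <= PI ->
  expGPhi (lcurve g eps f) = / exp (GG g / 2 * (f - PI / 2)) ^ 2.
Proof.
  intros He Hf. unfold expGPhi. rewrite Phi_lcurve by assumption.
  cbn [pow]. rewrite Rmult_1_r, <- exp_plus, <- exp_Ropp. f_equal. field.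
Qed.

End Finsleroid.

Theorem theorem1p1 (g eps f : R) :
  -2 < g < 2 ->
  (eps = 1 \/ eps = -1) ->
  0 <= f <= PI ->
  Kf g (lcurve g eps f) = 1 /\
  sqrt (det_gmet g (lcurve g eps f)) *
    Rabs (l2 g f * Derive (fun t => l1 g eps t) f
          - l1 g eps f * Derive (fun t => l2 g t) f) = / hh g.
Proof.
  intros Hg He Hf. split; [exact (Kf_lcurve g Hg eps f He Hf) |].
  change (lcurve g eps f) with (l1 g eps f, l2 g f).
  rewrite det_gmet_eq_sqr_expGPhi, sqrt_pow2, Rabs_lcurve_wronskian
    by first [exact Hg | exact He | apply lcurve_nonzero; assumption | left; apply exp_pos].
  fold (lcurve g eps f). rewrite expGPhi_lcurve by assumption.
  pose proof (hh_pos g Hg). pose proof (exp_pos (GG g / 2 * (f - PI / 2))).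
  field. split; lra.
Qed.
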